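(* Let $n\ge p\ge1$, $\lambda>0$, $0<\varepsilon<\frac34$, and let $f:\mathbb{R}^{n\times p}\to\mathbb{R}$ be twice continuously differentiable. Let $\mathrm{St}(p,n)^\varepsilon=\{X:\|X^\top X-I_p\|\le\varepsilon\}$, let $L>0$ be such that $\nabla f$ is $L$-Lipschitz on $\mathrm{St}(p,n)^\varepsilon$, $L'=\max_{X\in\mathrm{St}(p,n)^\varepsilon}\|\nabla f(X)\|$, $\hat L=\max(L,L')$, and $s=\sup_{X\in\mathrm{St}(p,n)^\varepsilon}\|\mathrm{sym}(X^\top\nabla f(X))\|$. Let $$\mu\ge\frac{2}{3-4\varepsilon}\left(L(1-\varepsilon)+3s+\hat L^2\frac{(1+\varepsilon)^2}{\lambda(1-\varepsilon)}\right),\qquad \nu=\lambda\mu,$$ and $\mathcal{L}(X)=f(X)-\frac12\langle\mathrm{sym}(X^\top\nabla f(X)),X^\top X-I_p\rangle+\mu\mathcal{N}(X)$. Then for all $X\in\mathrm{St}(p,n)^\varepsilon$, $$\langle\nabla\mathcal{L}(X),\Lambda(X)\rangle\ge\frac12\|\mathrm{grad}f(X)\|^2+\nu\mathcal{N}(X).$$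
   Context: $\|\cdot\|$ and $\langle\cdot,\cdot\rangle$ are the Frobenius norm and inner product. $\mathrm{sym}(M)=\frac12(M+M^\top)$, $\mathrm{skew}(M)=\frac12(M-M^\top)$. $\mathcal{N}(X)=\frac14\|X^\top X-I_p\|^2$. For all $X\in\mathbb{R}^{n\times p}$, $\mathrm{grad}f(X)=\mathrm{skew}(\nabla f(X)X^\top)X$, and the landing field is $\Lambda(X)=\mathrm{grad}f(X)+\lambda X(X^\top X-I_p)$. *)

From HB Require Import structures.
From mathcomp Require Import all_boot all_order all_algebra.
From mathcomp Require Import all_classical all_reals all_analysis.
Set Implicit Arguments. Unset Strict Implicit. Unset Printing Implicit Defensive.
Import Order.TTheory GRing.Theory Num.Theory.
Import numFieldNormedType.Exports.
Local Open Scope classical_set_scope.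
Local Open Scope ring_scope.

Definition frob_inner (R : realType) (m k : nat) (A B : 'M[R]_(m, k)) : R :=
  \sum_(i < m) \sum_(j < k) A i j * B i j.
Definition frob_norm (R : realType) (m k : nat) (A : 'M[R]_(m, k)) : R :=
  Num.sqrt (frob_inner A A).

Definition msym (R : realType) (k : nat) (M : 'M[R]_k) : 'M[R]_k :=
  2^-1 *: (M + M^T).
Definition mskew (R : realType) (k : nat) (M : 'M[R]_k) : 'M[R]_k :=
  2^-1 *: (M - M^T).

Definition egrad (R : realType) (n p : nat) (F : 'M[R]_(n, p) -> R)
  (X : 'M[R]_(n, p)) : 'M[R]_(n, p) :=
  \matrix_(i, j) ('D_(delta_mx i j) F X).

Definition C2 (R : realType) (n p : nat) (F : 'M[R]_(n, p) -> R) : Prop :=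
  (forall X, differentiable F X) /\
  (forall i j X, differentiable (fun Y => egrad F Y i j) X) /\
  (forall i j k l, continuous (fun X => egrad (fun Y => egrad F Y i j) X k l)).

Definition Ncons (R : realType) (n p : nat) (X : 'M[R]_(n, p)) : R :=
  4^-1 * frob_norm (X^T *m X - 1%:M) ^+ 2.

Definition St_eps (R : realType) (n p : nat) (eps : R) : set 'M[R]_(n, p) :=
  [set X | frob_norm (X^T *m X - 1%:M) <= eps].

Definition rgrad (R : realType) (n p : nat) (F : 'M[R]_(n, p) -> R)
  (X : 'M[R]_(n, p)) : 'M[R]_(n, p) :=
  mskew (egrad F X *m X^T) *m X.

Definition landing (R : realType) (n p : nat) (lam : R) (F : 'M[R]_(n, p) -> R)
  (X : 'M[R]_(n, p)) : 'M[R]_(n, p) :=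
  rgrad F X + lam *: (X *m (X^T *m X - 1%:M)).

Definition merit (R : realType) (n p : nat) (mu : R) (F : 'M[R]_(n, p) -> R)
  (X : 'M[R]_(n, p)) : R :=
  F X - 2^-1 * frob_inner (msym (X^T *m egrad F X)) (X^T *m X - 1%:M)
  + mu * Ncons X.

(* With D = X^T X - I, psi = skew(grad f(X) X^T) and S = sym(X^T grad f(X)), the landing
   field is Lambda = psi X + lam X D and satisfies Lambda^T X + X^T Lambda = 2 lam (D + D^2).
   This makes the derivative of the merit function along Lambda explicit:
     <grad L(X), Lambda> = ||psi||^2 - 1/2 <grad f, psi X D> - 3/2 lam <S, D^2>
                           - 1/2 <D_Lambda grad f(X), X D> + mu lam ||X D||^2.
   On St(p,n)^eps the Gram matrix X^T X is within eps of I, so ||X A||^2 and ||B X||^2 are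
   comparable to ||A||^2 and ||B||^2 up to factors 1 -+ eps. The Hessian term is bounded by
   L ||Lambda|| because X - t Lambda stays in St(p,n)^eps for small t > 0, where the
   Lipschitz bound on grad f applies. What is left is a quadratic form in ||psi|| and
   ||X D||, and the lower bound on mu makes its discriminant nonpositive. *)

From HB Require Import structures.
From mathcomp Require Import all_boot all_order all_algebra.
From mathcomp Require Import all_classical all_reals all_analysis.
From mathcomp Require Import ring lra.
Set Implicit Arguments. Unset Strict Implicit. Unset Printing Implicit Defensive.
Import Order.TTheory GRing.Theory Num.Theory.
Import numFieldNormedType.Exports.
Local Open Scope classical_set_scope.
Local Open Scope ring_scope.

(** * Frobenius inner product *)

Section Frobenius.
Variable R : realType.
Implicit Types (m k q : nat).

Lemma frob_innerE m k (A B : 'M[R]_(m, k)) : frob_inner A B = \tr (A^T *m B).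
Proof.
rewrite /frob_inner /mxtrace exchange_big; apply: eq_bigr => j _.
by rewrite mxE; apply: eq_bigr => i _; rewrite mxE.
Qed.

Lemma frob_innerC m k (A B : 'M[R]_(m, k)) : frob_inner A B = frob_inner B A.
Proof. by apply: eq_bigr => i _; apply: eq_bigr => j _; rewrite mulrC. Qed.

Lemma frob_innerDl m k (A B C : 'M[R]_(m, k)) :
  frob_inner (A + B) C = frob_inner A C + frob_inner B C.
Proof. by rewrite !frob_innerE linearD /= mulmxDl mxtraceD. Qed.

Lemma frob_innerZl m k a (A C : 'M[R]_(m, k)) :
  frob_inner (a *: A) C = a * frob_inner A C.
Proof. by rewrite !frob_innerE linearZ /= -scalemxAl mxtraceZ. Qed.

Lemma frob_innerNl m k (A C : 'M[R]_(m, k)) : frob_inner (- A) C = - frob_inner A C.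
Proof. by rewrite -scaleN1r frob_innerZl mulN1r. Qed.

Lemma frob_innerBl m k (A B C : 'M[R]_(m, k)) :
  frob_inner (A - B) C = frob_inner A C - frob_inner B C.
Proof. by rewrite frob_innerDl frob_innerNl. Qed.

Lemma frob_innerDr m k (A B C : 'M[R]_(m, k)) :
  frob_inner C (A + B) = frob_inner C A + frob_inner C B.
Proof. by rewrite frob_innerC frob_innerDl !(frob_innerC C). Qed.

Lemma frob_innerZr m k a (A C : 'M[R]_(m, k)) :
  frob_inner C (a *: A) = a * frob_inner C A.
Proof. by rewrite frob_innerC frob_innerZl frob_innerC. Qed.

Lemma frob_innerNr m k (A C : 'M[R]_(m, k)) : frob_inner C (- A) = - frob_inner C A.
Proof. by rewrite frob_innerC frob_innerNl frob_innerC. Qed.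

Lemma frob_innerBr m k (A B C : 'M[R]_(m, k)) :
  frob_inner C (A - B) = frob_inner C A - frob_inner C B.
Proof. by rewrite frob_innerDr frob_innerNr. Qed.

Lemma frob_inner0l m k (C : 'M[R]_(m, k)) : frob_inner 0 C = 0.
Proof. by rewrite -(scale0r (0 : 'M[R]_(m, k))) frob_innerZl mul0r. Qed.

Lemma frob_inner_trmx m k (A B : 'M[R]_(m, k)) : frob_inner A^T B^T = frob_inner A B.
Proof.
by rewrite /frob_inner exchange_big; apply: eq_bigr => i _; apply: eq_bigr => j _; rewrite !mxE.
Qed.

Lemma frob_inner_mulmxl m k q (A : 'M[R]_(m, k)) (B : 'M[R]_(k, q)) C :
  frob_inner (A *m B) C = frob_inner B (A^T *m C).
Proof. by rewrite !frob_innerE trmx_mul mulmxA. Qed.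

Lemma frob_inner_mulmxr m k q (A : 'M[R]_(m, k)) (B : 'M[R]_(k, q)) C :
  frob_inner (A *m B) C = frob_inner A (C *m B^T).
Proof. by rewrite !frob_innerE trmx_mul -mulmxA mxtrace_mulC mulmxA. Qed.

Lemma frob_inner_ge0 m k (A : 'M[R]_(m, k)) : 0 <= frob_inner A A.
Proof. by apply: sumr_ge0 => i _; apply: sumr_ge0 => j _; exact: sqr_ge0. Qed.

Lemma frob_inner_eq0 m k (A : 'M[R]_(m, k)) : frob_inner A A = 0 -> A = 0.
Proof.
move=> /eqP; rewrite psumr_eq0 => [/allP A0|i _]; last first.
  by apply: sumr_ge0 => j _; exact: sqr_ge0.
apply/matrixP => i j; move: (A0 i (mem_index_enum _)).
rewrite /= psumr_eq0 => [/allP/(_ j (mem_index_enum _))|j' _]; last exact: sqr_ge0.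
by rewrite mulf_eq0 orbb mxE => /eqP.
Qed.

Lemma frob_norm_ge0 m k (A : 'M[R]_(m, k)) : 0 <= frob_norm A.
Proof. exact: sqrtr_ge0. Qed.

Lemma frob_norm_sqr m k (A : 'M[R]_(m, k)) : frob_norm A ^+ 2 = frob_inner A A.
Proof. by rewrite sqr_sqrtr // frob_inner_ge0. Qed.

Lemma frob_norm_le m k (A : 'M[R]_(m, k)) c :
  0 <= c -> frob_inner A A <= c ^+ 2 -> frob_norm A <= c.
Proof. by move=> c0 Ac; rewrite -(ger0_norm c0) -sqrtr_sqr ler_sqrt // sqr_ge0. Qed.

Lemma frob_inner_le m k (A B : 'M[R]_(m, k)) :
  frob_inner A B <= frob_norm A * frob_norm B.
Proof.
set a := frob_norm A; set b := frob_norm B.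
have a0 : 0 <= a := frob_norm_ge0 A; have b0 : 0 <= b := frob_norm_ge0 B.
have [ab0|abgt0] := eqVneq (a * b) 0.
  have [->|->] : A = 0 \/ B = 0.
    move/eqP: ab0; rewrite mulf_eq0 => /orP[]/eqP ab0; [left|right];
      apply: frob_inner_eq0; rewrite -frob_norm_sqr; [rewrite -/a | rewrite -/b];
      by rewrite ab0 expr0n.
  - by rewrite frob_inner0l ab0.
  - by rewrite frob_innerC frob_inner0l ab0.
(* expanding ||b A - a B||^2 >= 0 gives 2ab (ab - <A,B>) >= 0 *)
have := frob_inner_ge0 (b *: A - a *: B).
rewrite !(frob_innerBl, frob_innerBr, frob_innerZl, frob_innerZr) (frob_innerC B A).
rewrite -!frob_norm_sqr -/a -/b => expand.
have abpos : 0 < a * b by rewrite lt_def abgt0 mulr_ge0.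
rewrite -subr_ge0 -(pmulr_rge0 _ abpos); nra.
Qed.

Lemma frob_normN m k (A : 'M[R]_(m, k)) : frob_norm (- A) = frob_norm A.
Proof. by rewrite /frob_norm frob_innerNl frob_innerNr opprK. Qed.

Lemma frob_inner_norm_le m k (A B : 'M[R]_(m, k)) :
  `|frob_inner A B| <= frob_norm A * frob_norm B.
Proof.
rewrite ler_norml frob_inner_le andbT lerNl -frob_innerNr -(frob_normN B).
exact: frob_inner_le.
Qed.

Lemma frob_norm_trmx m k (A : 'M[R]_(m, k)) : frob_norm A^T = frob_norm A.
Proof. by rewrite /frob_norm frob_inner_trmx. Qed.

Lemma frob_normZ m k a (A : 'M[R]_(m, k)) : frob_norm (a *: A) = `|a| * frob_norm A.
Proof.
by rewrite /frob_norm frob_innerZl frob_innerZr mulrA -expr2 sqrtrM ?sqr_ge0 // sqrtr_sqr.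
Qed.

Lemma ler_frob_normD m k (A B : 'M[R]_(m, k)) :
  frob_norm (A + B) <= frob_norm A + frob_norm B.
Proof.
apply: frob_norm_le; first by rewrite addr_ge0 ?frob_norm_ge0.
rewrite frob_innerDl !frob_innerDr (frob_innerC B A) -!frob_norm_sqr.
by have := frob_inner_le A B; nra.
Qed.

Lemma ler_frob_normB m k (A B : 'M[R]_(m, k)) :
  frob_norm (A - B) <= frob_norm A + frob_norm B.
Proof. by rewrite -(frob_normN B) ler_frob_normD. Qed.

Lemma frob_norm_mulmx_le m k q (A : 'M[R]_(m, k)) (B : 'M[R]_(k, q)) :
  frob_norm (A *m B) <= frob_norm A * frob_norm B.
Proof.
(* entrywise Cauchy-Schwarz between the rows of A and the columns of B *)
have row_sum n1 n2 (C : 'M[R]_(n1, n2)) :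
    frob_inner C C = \sum_i frob_inner (row i C) (row i C).
  by apply: eq_bigr => i _; rewrite /frob_inner big_ord1; apply: eq_bigr => j _; rewrite !mxE.
apply: frob_norm_le; first by rewrite mulr_ge0 ?frob_norm_ge0.
rewrite exprMn !frob_norm_sqr -(frob_inner_trmx B) (row_sum _ _ A) (row_sum _ _ B^T).
rewrite mulr_suml [leLHS]/frob_inner; apply: ler_sum => i _.
rewrite mulr_sumr; apply: ler_sum => j _.
have -> : (A *m B) i j = frob_inner (row i A) (row j B^T).
  by rewrite mxE /frob_inner big_ord1; apply: eq_bigr => t _; rewrite !mxE.
rewrite -!frob_norm_sqr -exprMn -expr2 -real_normK ?num_real //.
by rewrite lerXn2r ?nnegrE ?mulr_ge0 ?frob_norm_ge0 // frob_inner_norm_le.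
Qed.

Lemma frob_inner_mulmx_le m k q (G : 'M[R]_(m, q)) (P : 'M[R]_(m, k)) Y :
  frob_inner G (P *m Y) <= frob_norm P * frob_norm G * frob_norm Y.
Proof.
rewrite frob_innerC frob_inner_mulmxl mulrC; apply: le_trans (frob_inner_le _ _) _.
rewrite ler_wpM2l ?frob_norm_ge0 //; apply: le_trans (frob_norm_mulmx_le _ _) _.
by rewrite frob_norm_trmx.
Qed.

Lemma trmx_mskew k (A : 'M[R]_k) : (mskew A)^T = - mskew A.
Proof. by rewrite /mskew linearZ /= linearB /= trmxK -scalerN opprB. Qed.

Lemma frob_inner_msyml k (A B : 'M[R]_k) : B^T = B -> frob_inner (msym A) B = frob_inner A B.
Proof. by move=> Bsym; rewrite /msym frob_innerZl frob_innerDl -{2}Bsym frob_inner_trmx; lra. Qed.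

Lemma frob_inner_mskew k (A : 'M[R]_k) : frob_inner (mskew A) (mskew A) = frob_inner (mskew A) A.
Proof.
rewrite {2}/mskew frob_innerZr frob_innerBr.
by rewrite -[frob_inner _ A^T]frob_inner_trmx trmxK trmx_mskew frob_innerNl; lra.
Qed.

Lemma frob_norm_msym_le k (A : 'M[R]_k) : frob_norm (msym A) <= frob_norm A.
Proof.
rewrite /msym frob_normZ ger0_norm //.
by have := ler_frob_normD A A^T; rewrite frob_norm_trmx; lra.
Qed.
End Frobenius.

(** * Matrices close to the Stiefel manifold *)

Section StiefelNeighbourhood.
Variables (R : realType) (n p : nat) (eps : R) (X : 'M[R]_(n, p)).
Local Notation D := (X^T *m X - 1%:M).

Lemma trmx_constraint : D^T = D.
Proof. by rewrite linearB /= trmx_mul trmxK trmx1. Qed.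

Lemma gramE : X^T *m X = 1%:M + D.
Proof. by rewrite addrC subrK. Qed.

Lemma frob_inner_mulXA k (A : 'M[R]_(p, k)) :
  frob_inner (X *m A) (X *m A) = frob_inner A A + frob_inner A (D *m A).
Proof. by rewrite frob_inner_mulmxl mulmxA {1}gramE mulmxDl mul1mx frob_innerDr. Qed.

Hypothesis XSt : frob_norm D <= eps.

Lemma frob_inner_constraint_le k (A : 'M[R]_(p, k)) :
  `|frob_inner A (D *m A)| <= eps * frob_inner A A.
Proof.
apply: le_trans (frob_inner_norm_le _ _) _; rewrite -frob_norm_sqr expr2 mulrA mulrC.
rewrite ler_wpM2r ?frob_norm_ge0 //; apply: le_trans (frob_norm_mulmx_le _ _) _.
by rewrite ler_wpM2r ?frob_norm_ge0.
Qed.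

Lemma frob_inner_mulXA_le k (A : 'M[R]_(p, k)) :
  frob_inner (X *m A) (X *m A) <= (1 + eps) * frob_inner A A.
Proof.
by rewrite frob_inner_mulXA; have /ler_normlP[_] := frob_inner_constraint_le A; lra.
Qed.

Lemma frob_inner_mulXA_ge k (A : 'M[R]_(p, k)) :
  (1 - eps) * frob_inner A A <= frob_inner (X *m A) (X *m A).
Proof.
by rewrite frob_inner_mulXA; have /ler_normlP[+ _] := frob_inner_constraint_le A; lra.
Qed.

Lemma frob_inner_mulBXt_le k (B : 'M[R]_(k, p)) :
  frob_inner (B *m X^T) (B *m X^T) <= (1 + eps) * frob_inner B B.
Proof. by rewrite -frob_inner_trmx trmx_mul trmxK -(frob_inner_trmx B) frob_inner_mulXA_le. Qed.

Lemma frob_inner_mulBX_le k (B : 'M[R]_(k, n)) :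
  frob_inner (B *m X) (B *m X) <= (1 + eps) * frob_inner B B.
Proof.
(* y := ||B X||^2 satisfies y = <B, B X X^T> <= ||B|| ||B X X^T||
   and ||B X X^T||^2 <= (1 + eps) y *)
have eps0 : 0 <= eps := le_trans (frob_norm_ge0 _) XSt.
set y := frob_inner (B *m X) (B *m X); set b := frob_norm B.
set z := frob_norm (B *m X *m X^T).
have y_le : y <= b * z by rewrite /y frob_inner_mulmxr; exact: frob_inner_le.
have z_le : z ^+ 2 <= (1 + eps) * y by rewrite frob_norm_sqr frob_inner_mulBXt_le.
have y0 : 0 <= y := frob_inner_ge0 _.
have b0 : 0 <= b := frob_norm_ge0 _; have z0 : 0 <= z := frob_norm_ge0 _.
rewrite -frob_norm_sqr -/b.
have [->|ygt0] := eqVneq y 0; first by rewrite mulr_ge0 ?sqr_ge0 //; lra.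
have ypos : 0 < y by rewrite lt_def ygt0.
by rewrite -(ler_pM2l ypos); nra.
Qed.

Lemma frob_norm_St_le : frob_norm X <= frob_norm (1%:M : 'M[R]_p) + eps.
Proof.
have eps0 : 0 <= eps := le_trans (frob_norm_ge0 _) XSt.
apply: frob_norm_le; first by rewrite addr_ge0 ?frob_norm_ge0.
have -> : frob_inner X X = frob_inner (1%:M : 'M[R]_p) (X^T *m X).
  by rewrite !frob_innerE trmx1 mul1mx.
rewrite gramE frob_innerDr -frob_norm_sqr.
have := frob_inner_le (1%:M : 'M[R]_p) D.
have := ler_wpM2l (frob_norm_ge0 (1%:M : 'M[R]_p)) XSt.
have := frob_norm_ge0 (1%:M : 'M[R]_p); nra.
Qed.

End StiefelNeighbourhood.

Lemma in_St_eps (R : realType) n p (eps : R) (X : 'M[R]_(n, p)) :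
  (X \in St_eps eps) = (frob_norm (X^T *m X - 1%:M) <= eps).
Proof. by apply/idP/idP; rewrite inE. Qed.

(** * Small landing steps stay in St(p,n)^eps *)

Lemma gram_variation_landing (R : realType) n p (X : 'M[R]_(n, p)) (P : 'M[R]_n) lam :
  P^T = - P ->
  let D := X^T *m X - 1%:M in let V := P *m X + lam *: (X *m D) in
  V^T *m X + X^T *m V = (2 * lam) *: (D + D *m D).
Proof.
move=> Pskew D V; have XtX : X^T *m X = 1%:M + D := gramE X.
have -> : V^T *m X = - (X^T *m P *m X) + lam *: (D + D *m D).
  rewrite linearD /= linearZ /= !trmx_mul Pskew trmx_constraint mulmxDl.
  by rewrite -scalemxAl -(mulmxA D) XtX mulmxDr mulmx1 mulmxN mulNmx.
have -> : X^T *m V = X^T *m P *m X + lam *: (D + D *m D).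
  by rewrite mulmxDr -scalemxAr !mulmxA XtX mulmxDl mul1mx.
by rewrite addrACA addNr add0r -scalerDl mulr2n mulrDl mul1r.
Qed.

Lemma small_step_le (R : realFieldType) (a kap K eps : R) :
  0 <= a <= eps ^+ 2 -> 0 < eps -> 0 < kap -> 0 <= K ->
  exists2 d, 0 < d & forall t, 0 < t < d -> a - kap * t * a + t ^+ 2 * K <= eps ^+ 2.
Proof.
move=> /andP[a0 a_le] eps0 kap0 K0.
have eps20 : 0 < eps ^+ 2 := exprn_gt0 2 eps0.
have m0 : 0 < Num.min 1 kap by rewrite lt_min ltr01.
exists (Num.min 1 (Num.min 1 kap * eps ^+ 2 / (2 * (K + 1)))).
  by rewrite lt_min ltr01 divr_gt0 ?mulr_gt0 //; lra.
move=> t /andP[t0]; rewrite lt_min => /andP[t1].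
rewrite ltr_pdivlMr => [td|]; last lra.
have m1 : Num.min 1 kap <= 1 by rewrite ge_min lexx.
have mkap : Num.min 1 kap <= kap by rewrite ge_min lexx orbT.
have tK : t ^+ 2 * K <= t * K by rewrite expr2 -mulrA ler_piMl ?mulr_ge0 //; lra.
have tK_le : t * K <= Num.min 1 kap * eps ^+ 2 / 2 by nra.
(* if a <= eps^2/2 the quadratic term is small, otherwise the linear one dominates it *)
have [a_small|a_large] := lerP a (eps ^+ 2 / 2).
  have : 0 <= kap * t * a by rewrite !mulr_ge0 //; lra.
  have : Num.min 1 kap * eps ^+ 2 <= eps ^+ 2 by rewrite ler_piMl // ltW.
  lra.
have : t * (t * K) <= t * (kap * a).
  by rewrite ler_wpM2l; [| lra | nra].
by rewrite expr2 -mulrA; lra.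
Qed.

Lemma frob_inner_sqr_expand (R : realType) m k (D E Q : 'M[R]_(m, k)) (c r : R) :
  frob_inner (D - c *: E + r *: Q) (D - c *: E + r *: Q)
  = frob_inner D D - 2 * c * frob_inner D E + 2 * r * frob_inner D Q
    + c ^+ 2 * frob_inner E E - 2 * c * r * frob_inner E Q + r ^+ 2 * frob_inner Q Q.
Proof.
rewrite !(frob_innerDl, frob_innerDr, frob_innerNl, frob_innerNr, frob_innerZl, frob_innerZr).
by rewrite (frob_innerC E D) (frob_innerC Q D) (frob_innerC Q E); ring.
Qed.

Lemma frob_inner_step_le (R : realType) m k (D E Q : 'M[R]_(m, k)) (lam eps : R) :
  0 < lam -> (1 - eps) * frob_inner D D <= frob_inner D E ->
  exists2 K, 0 <= K & forall t, 0 < t < 1 ->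
    frob_inner (D - (2 * lam * t) *: E + t ^+ 2 *: Q) (D - (2 * lam * t) *: E + t ^+ 2 *: Q)
    <= frob_inner D D - 4 * lam * (1 - eps) * t * frob_inner D D + t ^+ 2 * K.
Proof.
move=> lam0 DE_ge.
exists (2 * `|frob_inner D Q| + 4 * lam ^+ 2 * frob_inner E E
        + 4 * lam * `|frob_inner E Q| + frob_inner Q Q).
  by rewrite !addr_ge0 ?mulr_ge0 ?frob_inner_ge0 ?sqr_ge0 ?(ltW lam0).
move=> t /andP[t0 t1]; rewrite frob_inner_sqr_expand.
have t2_0 : 0 <= t ^+ 2 := exprn_ge0 2 (ltW t0).
have t3 : t ^+ 3 <= t ^+ 2 by rewrite exprS; apply: ler_piMl => //; exact: ltW.
have t4 : t ^+ 4 <= t ^+ 2.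
  by rewrite -[4%N]/(2 + 2)%N exprD; apply: ler_piMl; rewrite // expr_le1 // ltW.
have DE := ler_wpM2l (ltW (mulr_gt0 (mulr_gt0 (ltr0Sn _ 3) lam0) t0)) DE_ge.
have DQ := ler_wpM2l t2_0 (ler_norm (frob_inner D Q)).
have EQ : - (t ^+ 3 * frob_inner E Q) <= t ^+ 2 * `|frob_inner E Q|.
  apply: le_trans (ler_wpM2r (normr_ge0 _) t3).
  by rewrite -mulrN ler_wpM2l ?exprn_ge0 ?(ltW t0) // -normrN ler_norm.
have {}EQ := ler_wpM2l (ltW (mulr_gt0 (ltr0Sn _ 3) lam0)) EQ.
have QQ := ler_wpM2r (frob_inner_ge0 Q) t4.
rewrite -!exprM /= exprMn; lra.
Qed.

Lemma gram_landing_step (R : realType) n p (X : 'M[R]_(n, p)) (P : 'M[R]_n) (lam t : R) :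
  P^T = - P ->
  let D := X^T *m X - 1%:M in let V := P *m X + lam *: (X *m D) in
  (X - t *: V)^T *m (X - t *: V) - 1%:M
  = D - (2 * lam * t) *: (D + D *m D) + t ^+ 2 *: (V^T *m V).
Proof.
move=> Pskew D V.
have -> : (X - t *: V)^T *m (X - t *: V)
          = X^T *m X - t *: (V^T *m X + X^T *m V) + t ^+ 2 *: (V^T *m V).
  rewrite [_^T]linearB /= [(t *: V)^T]linearZ /= mulmxBl !mulmxBr -!scalemxAl -!scalemxAr.
  rewrite scalerA expr2; move: (X^T *m X) (X^T *m V) (V^T *m X) (V^T *m V) => A B C F.
  by apply/matrixP => i j; rewrite !mxE; ring.
rewrite gram_variation_landing // -/D scalerA (mulrC t).
by rewrite addrAC (addrAC (X^T *m X)).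
Qed.

Lemma St_eps_landing_step (R : realType) n p (X : 'M[R]_(n, p)) (P : 'M[R]_n) (eps lam : R) :
  0 < eps -> eps < 1 -> 0 < lam -> P^T = - P -> X \in St_eps eps ->
  exists2 d, 0 < d & forall t, 0 < t < d ->
    X - t *: (P *m X + lam *: (X *m (X^T *m X - 1%:M))) \in St_eps eps.
Proof.
move=> eps0 eps1 lam0 Pskew; rewrite in_St_eps => XSt.
set D := X^T *m X - 1%:M; set V := P *m X + lam *: (X *m D).
have DE_ge : (1 - eps) * frob_inner D D <= frob_inner D (D + D *m D).
  have /ler_normlP[+ _] := frob_inner_constraint_le XSt D.
  by rewrite -/D (frob_innerDr D (D *m D) D); lra.
have [K K0 step_le] := frob_inner_step_le (V^T *m V) lam0 DE_ge.
have a_in : 0 <= frob_inner D D <= eps ^+ 2.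
  by rewrite frob_inner_ge0 -frob_norm_sqr lerXn2r ?nnegrE ?frob_norm_ge0 ?(ltW eps0).
have kap0 : 0 < 4 * lam * (1 - eps) by rewrite !mulr_gt0 //; lra.
have [d d0 small] := small_step_le a_in eps0 kap0 K0.
exists (Num.min d 1); first by rewrite lt_min d0 ltr01.
move=> t /andP[t0]; rewrite lt_min => /andP[td t1].
rewrite in_St_eps gram_landing_step //; apply: frob_norm_le; first exact: ltW.
by apply: le_trans (step_le _ _) (small _ _); rewrite t0.
Qed.

(** * Derivatives of matrix-valued functions *)

Section EntrywiseDerivative.
Context {R : realType} {U : normedModType R}.

Lemma is_derive_mxP m k (M : U -> 'M[R]_(m, k)) x v dM :
  is_derive x v M dM <-> forall i j, is_derive x v (fun y => M y i j) (dM i j).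
Proof.
split=> [[dMx <-] i j | dMij].
  apply: DeriveDef; first exact: (derivable_mxP M x v).1 dMx i j.
  by rewrite derive_mx // mxE.
have dMx : derivable M x v by apply/derivable_mxP => i j; have [] := dMij i j.
apply: DeriveDef; rewrite ?derive_mx //; apply/matrixP => i j.
by rewrite mxE; have [] := dMij i j.
Qed.

Lemma differentiable_mxP m k (M : U -> 'M[R]_(m, k)) x :
  differentiable M x <-> forall i j, differentiable (fun y => M y i j) x.
Proof.
split=> [dM i j | dMij].
  have -> : (fun y => M y i j) = (fun A : 'M[R]_(m, k) => A i j) \o M by [].
  exact/differentiable_comp/differentiable_coord.
have -> : M = fun y => \sum_i \sum_j M y i j *: delta_mx i j.
  by apply: funext => y; rewrite [LHS]matrix_sum_delta.
rewrite -fct_sumE; apply: differentiable_sum => i.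
rewrite -fct_sumE; apply: differentiable_sum => j.
exact: differentiableZl.
Qed.

Section Rules.
Variables (x v : U) (m k q : nat).

Lemma is_derive_trmx (A : U -> 'M[R]_(m, k)) dA :
  is_derive x v A dA -> is_derive x v (fun y => (A y)^T) dA^T.
Proof.
move=> /is_derive_mxP dAij; apply/is_derive_mxP => i j; rewrite mxE.
by under eq_fun do rewrite mxE; exact: dAij.
Qed.

Lemma is_derive_mulmx (A : U -> 'M[R]_(m, k)) (B : U -> 'M[R]_(k, q)) dA dB :
  is_derive x v A dA -> is_derive x v B dB ->
  is_derive x v (fun y => A y *m B y) (dA *m B x + A x *m dB).
Proof.
move=> /is_derive_mxP dAij /is_derive_mxP dBij; apply/is_derive_mxP => i j.
have -> : (fun y => (A y *m B y) i j) = fun y => \sum_l A y i l * B y l j.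
  by apply: funext => y; rewrite mxE.
have -> : (dA *m B x + A x *m dB) i j = \sum_l (A x i l *: dB l j + B x l j *: dA i l).
  by rewrite !mxE -big_split; apply: eq_bigr => l _; rewrite /= addrC [dA _ _ * _]mulrC.
by rewrite -fct_sumE; apply: is_derive_sum => l; apply: is_deriveM.
Qed.

Lemma is_derive_frob_inner (A B : U -> 'M[R]_(m, k)) dA dB :
  is_derive x v A dA -> is_derive x v B dB ->
  is_derive x v (fun y => frob_inner (A y) (B y))
    (frob_inner dA (B x) + frob_inner (A x) dB).
Proof.
move=> /is_derive_mxP dAij /is_derive_mxP dBij.
rewrite /frob_inner -big_split -fct_sumE; apply: is_derive_sum => i.
rewrite -big_split -fct_sumE; apply: is_derive_sum => j.
apply: is_derive_eq (is_deriveM (dAij i j) (dBij i j)) _.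
by rewrite /= addrC [dA i j * _]mulrC.
Qed.

Lemma differentiable_trmx (A : U -> 'M[R]_(m, k)) :
  differentiable A x -> differentiable (fun y => (A y)^T) x.
Proof.
by move=> /differentiable_mxP dAij; apply/differentiable_mxP => i j; under eq_fun do rewrite mxE.
Qed.

Lemma differentiable_mulmx (A : U -> 'M[R]_(m, k)) (B : U -> 'M[R]_(k, q)) :
  differentiable A x -> differentiable B x -> differentiable (fun y => A y *m B y) x.
Proof.
move=> /differentiable_mxP dAij /differentiable_mxP dBij; apply/differentiable_mxP => i j.
have -> : (fun y => (A y *m B y) i j) = fun y => \sum_l A y i l * B y l j.
  by apply: funext => y; rewrite mxE.
by rewrite -fct_sumE; apply: differentiable_sum => l; apply: differentiableM.
Qed.

Lemma differentiable_frob_inner (A B : U -> 'M[R]_(m, k)) :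
  differentiable A x -> differentiable B x ->
  differentiable (fun y => frob_inner (A y) (B y)) x.
Proof.
move=> /differentiable_mxP dAij /differentiable_mxP dBij.
rewrite /frob_inner -fct_sumE; apply: differentiable_sum => i.
by rewrite -fct_sumE; apply: differentiable_sum => j; apply: differentiableM.
Qed.

End Rules.
End EntrywiseDerivative.

Lemma frob_norm_derive_le (R : realType) (U : normedModType R) m k
    (G : U -> 'M[R]_(m, k)) x v (c d : R) :
  derivable G x v -> 0 <= c -> 0 < d ->
  (forall t, 0 < t < d -> frob_norm (G (x - t *: v) - G x) <= c * t) ->
  frob_norm ('D_v G x) <= c.
Proof.
move=> dG c0 d0 G_lip; apply: frob_norm_le => //.
set q := fun A : 'M[R]_(m, k) => frob_inner A A.
set phi := fun h : R => h^-1 *: (G (h *: v + x) - G x).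
(* the hypothesis only controls steps x - t *: v with t > 0, so the limit is taken from the left *)
have phi_left : phi @ 0^'- --> 'D_v G x by apply: cvg_dnbhs_at_left; exact: dG.
have q_cont : {for 'D_v G x, continuous q}.
  apply: differentiable_continuous; apply: differentiable_frob_inner;
  by apply/differentiable_mxP => i j; exact: differentiable_coord.
have qphi_left : q \o phi @ 0^'- --> q ('D_v G x) by exact: continuous_cvg.
rewrite -[frob_inner _ _]/(q _) -(cvg_lim _ qphi_left) //.
apply: limr_le; first by apply/cvg_ex; exists (q ('D_v G x)).
exists d => //= h; rewrite /ball_ /= sub0r normrN => h_lt h_neg.
rewrite ltr0_norm // in h_lt.
have := G_lip (- h); rewrite oppr_gt0 h_neg h_lt scaleNr opprK [x + _]addrC => /(_ isT) G_le.
have h2 : 0 < h ^+ 2 by rewrite -sqrrN exprn_gt0 // oppr_gt0.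
have sq : frob_norm (G (h *: v + x) - G x) ^+ 2 <= c ^+ 2 * h ^+ 2.
  rewrite -(sqrrN h) -exprMn lerXn2r ?nnegrE ?frob_norm_ge0 //.
  by rewrite mulr_ge0 // oppr_ge0 ltW.
rewrite /q /phi /= frob_innerZl frob_innerZr -frob_norm_sqr mulrA -expr2 exprVn.
rewrite -(mulfK (lt0r_neq0 h2) (c ^+ 2)) [leLHS]mulrC.
by apply: ler_wpM2r sq; rewrite invr_ge0 ltW.
Qed.

(** * The merit function along the landing field *)

Lemma frob_inner_egrad (R : realType) n p (F : 'M[R]_(n, p) -> R) X V :
  differentiable F X -> frob_inner (egrad F X) V = 'D_V F X.
Proof.
move=> dF; rewrite deriveE // [in RHS](matrix_sum_delta V) !linear_sum.
apply: eq_bigr => i _; rewrite linear_sum; apply: eq_bigr => j _.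
by rewrite linearZ /= mxE deriveE // mulrC.
Qed.

Section MeritDerivative.
Variables (R : realType) (n p : nat) (f : 'M[R]_(n, p) -> R) (mu : R).
Hypothesis f_C2 : C2 f.

Lemma differentiable_egrad X : differentiable (egrad f) X.
Proof. by apply/differentiable_mxP => i j; exact: f_C2.2.1. Qed.

Lemma is_derive_egrad X V : is_derive X V (egrad f) ('D_V (egrad f) X).
Proof. exact/derivableP/diff_derivable/differentiable_egrad. Qed.

Let constraint (Y : 'M[R]_(n, p)) := Y^T *m Y - 1%:M.

Lemma meritE : merit mu f = fun Y =>
  f Y - 2^-1 * frob_inner (msym (Y^T *m egrad f Y)) (constraint Y)
  + mu * (4^-1 * frob_inner (constraint Y) (constraint Y)).
Proof. by apply: funext => Y; rewrite /merit /Ncons frob_norm_sqr. Qed.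

Lemma differentiable_merit X : differentiable (merit mu f) X.
Proof.
have dX : differentiable (fun Y : 'M[R]_(n, p) => Y) X.
  by apply/differentiable_mxP => i j; exact: differentiable_coord.
have dXt := differentiable_trmx dX.
have dS : differentiable (fun Y => msym (Y^T *m egrad f Y)) X.
  have dM := differentiable_mulmx dXt (differentiable_egrad X).
  exact: differentiableZ (differentiableD dM (differentiable_trmx dM)).
have dC : differentiable constraint X.
  exact: differentiableB (differentiable_mulmx dXt dX) (differentiable_cst _ _).
rewrite meritE; apply: differentiableD; first apply: differentiableB; first exact: f_C2.1.
  by apply: differentiableM => //; exact: differentiable_frob_inner.
by apply: differentiableM => //; apply: differentiableM => //; exact: differentiable_frob_inner.
Qed.

Lemma is_derive_merit X V :
  let G := egrad f X in let DV := V^T *m X + X^T *m V in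
  is_derive X V (merit mu f)
    (frob_inner G V
     - 2^-1 * (frob_inner (msym (V^T *m G + X^T *m 'D_V (egrad f) X)) (constraint X)
               + frob_inner (msym (X^T *m G)) DV)
     + mu * (2^-1 * frob_inner DV (constraint X))).
Proof.
move=> G DV.
have dXt : is_derive X V (fun Y : 'M[R]_(n, p) => Y^T) V^T by exact: is_derive_trmx.
have dS : is_derive X V (fun Y => msym (Y^T *m egrad f Y))
                   (msym (V^T *m G + X^T *m 'D_V (egrad f) X)).
  have dM := is_derive_mulmx dXt (is_derive_egrad X V).
  exact: is_deriveZ (is_deriveD dM (is_derive_trmx dM)).
have dC : is_derive X V constraint DV.
  have dXtX := is_derive_mulmx dXt (is_derive_id X V).
  by apply: is_derive_eq (is_deriveB dXtX (is_derive_cst _ _ _)) _; rewrite subr0.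
have df : is_derive X V f (frob_inner G V).
  by rewrite frob_inner_egrad; [exact/derivableP/diff_derivable/f_C2.1 | exact: f_C2.1].
rewrite meritE; apply: is_derive_eq.
  exact: is_deriveD (is_deriveB df (is_deriveZ _ (is_derive_frob_inner dS dC)))
                    (is_deriveZ _ (is_deriveZ _ (is_derive_frob_inner dC dC))).
rewrite /= [frob_inner (constraint X) _]frob_innerC; congr (_ + _).
by rewrite /GRing.scale /=; field.
Qed.

End MeritDerivative.

Lemma frob_inner_egrad_merit_landing (R : realType) n p (f : 'M[R]_(n, p) -> R) (mu lam : R) X :
  C2 f ->
  let G := egrad f X in let D := X^T *m X - 1%:M in let P := mskew (G *m X^T) in
  frob_inner (egrad (merit mu f) X) (landing lam f X)
  = frob_inner P P - 2^-1 * frob_inner G (P *m X *m D)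
    - 3 / 2 * lam * frob_inner (msym (X^T *m G)) (D *m D)
    - 2^-1 * frob_inner ('D_(landing lam f X) (egrad f) X) (X *m D)
    + mu * lam * frob_inner (X *m D) (X *m D).
Proof.
move=> f_C2 G D P; set V := landing lam f X; set DG := 'D_V (egrad f) X.
set S := msym (X^T *m G).
have VE : V = P *m X + lam *: (X *m D) by [].
have Dsym : D^T = D := trmx_constraint X.
have DDsym : (D *m D)^T = D *m D by rewrite trmx_mul Dsym.
have gramV : V^T *m X + X^T *m V = (2 * lam) *: (D + D *m D).
  by rewrite VE; apply: gram_variation_landing; exact: trmx_mskew.
rewrite frob_inner_egrad; last exact: differentiable_merit.
have /= [_ ->] := is_derive_merit mu f_C2 X V.
rewrite -/G -/D -/DG -/S gramV.
have GV : frob_inner G V = frob_inner P P + lam * frob_inner S D.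
  rewrite VE frob_innerDr frob_innerZr !(frob_innerC G) frob_inner_mulmxr frob_inner_mulmxl.
  by rewrite -frob_inner_mskew /S (frob_inner_msyml _ Dsym) (frob_innerC D).
have SDV : frob_inner (msym (V^T *m G + X^T *m DG)) D
           = frob_inner G (P *m X *m D) + lam * frob_inner S (D *m D) + frob_inner DG (X *m D).
  rewrite (frob_inner_msyml _ Dsym) frob_innerDl !frob_inner_mulmxl !trmxK VE mulmxDl.
  rewrite -scalemxAl frob_innerDr frob_innerZr /S (frob_inner_msyml _ DDsym) -(mulmxA X D D).
  by rewrite (frob_innerC G (X *m _)) frob_inner_mulmxl (frob_innerC (D *m D)).
have DDX : frob_inner (D + D *m D) D = frob_inner (X *m D) (X *m D).
  by rewrite frob_inner_mulXA frob_innerDl (frob_innerC (D *m D)).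
rewrite GV SDV (frob_innerZl (2 * lam)) (frob_innerZr (2 * lam)) DDX.
by rewrite (frob_innerDr D (D *m D) S); field.
Qed.

Lemma le_sup_image (R : realType) T (A : set T) (h : T -> R) x B :
  A x -> (forall y, A y -> h y <= B) -> h x <= sup [set h y | y in A].
Proof. by move=> Ax hB; apply: ub_le_sup; [exists B => _ [y Ay <-]; exact: hB | exists x]. Qed.

Lemma lipschitz_St_eps_bounded (R : realType) n p m k (eps L : R)
    (G : 'M[R]_(n, p) -> 'M[R]_(m, k)) (X0 : 'M[R]_(n, p)) :
  0 <= L -> (forall X Y : 'M[R]_(n, p), X \in St_eps eps -> Y \in St_eps eps ->
                frob_norm (G X - G Y) <= L * frob_norm (X - Y)) ->
  X0 \in St_eps eps -> exists B, forall Y : 'M[R]_(n, p), Y \in St_eps eps -> frob_norm (G Y) <= B.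
Proof.
move=> L0 G_lip X0St; set c := frob_norm (1%:M : 'M[R]_p) + eps.
exists (frob_norm (G X0) + L * (c + c)) => Y YSt.
have := ler_frob_normD (G X0) (G Y - G X0); rewrite addrC subrK => /le_trans; apply.
rewrite lerD2l; apply: le_trans (G_lip _ _ YSt X0St) _; rewrite ler_wpM2l //.
apply: le_trans (ler_frob_normB _ _) _.
move: X0St YSt; rewrite !in_St_eps => X0St YSt.
exact: lerD (frob_norm_St_le YSt) (frob_norm_St_le X0St).
Qed.

Lemma le_sup_St_eps (R : realType) n p (eps L : R) (G : 'M[R]_(n, p) -> 'M[R]_(n, p)) X :
  0 <= L -> (forall X Y, X \in St_eps eps -> Y \in St_eps eps ->
                frob_norm (G X - G Y) <= L * frob_norm (X - Y)) ->
  X \in St_eps eps ->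
  frob_norm (G X) <= sup [set frob_norm (G Y) | Y in St_eps eps] /\
  frob_norm (msym (X^T *m G X)) <= sup [set frob_norm (msym (Y^T *m G Y)) | Y in St_eps eps].
Proof.
move=> L0 G_lip XSt; have [B G_bnd] := lipschitz_St_eps_bounded L0 G_lip XSt.
have StE Y : St_eps eps Y -> Y \in St_eps eps by rewrite inE.
have XSt' : St_eps eps X by move: XSt; rewrite inE.
split; first by apply: (le_sup_image (h := fun Y => frob_norm (G Y)) (B := B)) => // Y /StE /G_bnd.
apply: (le_sup_image (h := fun Y => frob_norm (msym (Y^T *m G Y)))
                     (B := (frob_norm (1%:M : 'M[R]_p) + eps) * B)) => //.
move=> Y /StE YSt; apply: le_trans (frob_norm_msym_le _) _.
apply: le_trans (frob_norm_mulmx_le _ _) _; rewrite frob_norm_trmx ler_pM ?frob_norm_ge0 //.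
  by apply: frob_norm_St_le; move: YSt; rewrite in_St_eps.
exact: G_bnd.
Qed.

Lemma frob_norm_derive_egrad_landing_le (R : realType) n p (f : 'M[R]_(n, p) -> R)
    (eps lam L : R) X :
  C2 f -> 0 < eps -> eps < 1 -> 0 < lam -> 0 <= L ->
  (forall X Y, X \in St_eps eps -> Y \in St_eps eps ->
     frob_norm (egrad f X - egrad f Y) <= L * frob_norm (X - Y)) ->
  X \in St_eps eps ->
  frob_norm ('D_(landing lam f X) (egrad f) X) <= L * frob_norm (landing lam f X).
Proof.
move=> f_C2 eps0 eps1 lam0 L0 f_lip XSt.
have [d d0 step] := St_eps_landing_step eps0 eps1 lam0 (trmx_mskew (egrad f X *m X^T)) XSt.
apply: (frob_norm_derive_le (d := d)); rewrite ?mulr_ge0 ?frob_norm_ge0 //.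
  exact/diff_derivable/differentiable_egrad.
move=> t t_in; apply: le_trans (f_lip _ _ (step t t_in) XSt) _.
have t0 : 0 <= t by case/andP: t_in => /ltW.
by rewrite addrAC subrr add0r frob_normN frob_normZ ger0_norm // -[leRHS]mulrA [_ * t]mulrC.
Qed.

Lemma quadratic_form_ge0 (R : realFieldType) (A B C x y : R) :
  0 < A -> B ^+ 2 <= 4 * A * C -> 0 <= A * x ^+ 2 - B * x * y + C * y ^+ 2.
Proof.
move=> A0 disc; rewrite -(pmulr_rge0 _ (mulr_gt0 (ltr0Sn _ 3) A0)).
have -> : 4 * A * (A * x ^+ 2 - B * x * y + C * y ^+ 2)
          = (2 * A * x - B * y) ^+ 2 + (4 * A * C - B ^+ 2) * y ^+ 2 by ring.
by rewrite addr_ge0 ?sqr_ge0 // mulr_ge0 ?sqr_ge0 // subr_ge0.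
Qed.

Lemma mu_bound_discriminant (R : realFieldType) (s L hL lam mu eps : R) :
  0 < eps -> eps < 3 / 4 -> 0 < lam -> 0 < L -> 0 <= s ->
  2 / (3 - 4 * eps) *
    (L * (1 - eps) + 3 * s + hL ^+ 2 * ((1 + eps) ^+ 2 / (lam * (1 - eps)))) <= mu ->
  0 <= mu /\
  hL ^+ 2 * (2 + eps) ^+ 2 <= 8 * lam * (mu * (3 / 4 - eps) - L * (1 - eps) / 2 - 3 * s / 2).
Proof.
move=> eps0 eps34 lam0 L0 s0 mu_ge.
have eps1 : 0 < 1 - eps by lra.
have lameps : 0 < lam * (1 - eps) by rewrite mulr_gt0.
set k := hL ^+ 2 * ((1 + eps) ^+ 2 / (lam * (1 - eps))) in mu_ge.
have kE : k * (lam * (1 - eps)) = hL ^+ 2 * (1 + eps) ^+ 2.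
  by rewrite /k -mulrA divfK // lt0r_neq0.
have k0 : 0 <= k by rewrite /k mulr_ge0 ?sqr_ge0 // divr_ge0 ?sqr_ge0 // ltW.
have mu_ge' : 2 * (L * (1 - eps) + 3 * s + k) <= (3 - 4 * eps) * mu.
  have c0 : 0 < 3 - 4 * eps by lra.
  have := ler_wpM2l (ltW c0) mu_ge.
  by rewrite mulrA mulrCA divff ?lt0r_neq0 // mulr1.
split; first by nra.
set W := mu * (3 / 4 - eps) - L * (1 - eps) / 2 - 3 * s / 2.
have kW : hL ^+ 2 * (1 + eps) ^+ 2 <= 2 * (lam * (1 - eps)) * W.
  have k_le : k <= 2 * W by rewrite /W; lra.
  by rewrite -kE; have := ler_wpM2r (ltW lameps) k_le; lra.
(* this is where the factor (1 + eps)^2 in the bound on mu comes from *)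
have poly : (1 - eps) * (2 + eps) ^+ 2 <= 4 * (1 + eps) ^+ 2 by nra.
have := ler_wpM2l (sqr_ge0 hL) poly => hL_poly.
by rewrite -(ler_pM2l eps1); lra.
Qed.

(* In the application a = ||psi||, b = ||psi X||, d = ||D||, e = ||X D||, g = ||grad f(X)||
   and t1, t2, t3 are the three cross terms of the derivative of the merit function. *)
Lemma landing_descent_ineq (R : realFieldType) (a b e d g s L hL lam mu eps t1 t2 t3 : R) :
  0 <= a -> 0 <= b -> 0 <= e -> 0 < eps -> eps < 3 / 4 -> 0 < lam ->
  0 < L -> L <= hL -> g <= hL -> 0 <= s ->
  b ^+ 2 <= (1 + eps) * a ^+ 2 -> (1 - eps) * d ^+ 2 <= e ^+ 2 ->
  t1 <= a * g * e -> t2 <= s * d ^+ 2 -> t3 <= L * (b + lam * e) * e ->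
  2 / (3 - 4 * eps) *
    (L * (1 - eps) + 3 * s + hL ^+ 2 * ((1 + eps) ^+ 2 / (lam * (1 - eps)))) <= mu ->
  2^-1 * b ^+ 2 + lam * mu * (4^-1 * d ^+ 2)
  <= a ^+ 2 - 2^-1 * t1 - 3 / 2 * lam * t2 - 2^-1 * t3 + mu * lam * e ^+ 2.
Proof.
move=> a0 b0 e0 eps0 eps34 lam0 L0 LhL ghL s0 ba de t1_le t2_le t3_le mu_ge.
have eps1 : 0 < 1 - eps by lra.
have [mu0] := mu_bound_discriminant eps0 eps34 lam0 L0 s0 mu_ge.
set W := mu * (3 / 4 - eps) - L * (1 - eps) / 2 - 3 * s / 2 => disc.
have b_le : b <= (1 + eps) * a.
  rewrite -ler_sqr ?nnegrE ?mulr_ge0 //; last lra.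
  by apply: le_trans ba _; rewrite exprMn ler_wpM2r ?sqr_ge0 //; nra.
set P1 := (1 - eps) / 2 * a ^+ 2 - hL * (2 + eps) / 2 * a * e + lam * (mu - L / 2) * e ^+ 2
          - (3 * s / 2 + mu / 4) * lam * d ^+ 2.
have P1_le : P1 <= a ^+ 2 - 2^-1 * t1 - 3 / 2 * lam * t2 - 2^-1 * t3 + mu * lam * e ^+ 2
                   - (2^-1 * b ^+ 2 + lam * mu * (4^-1 * d ^+ 2)).
  have age : a * g * e <= a * hL * e by rewrite -!mulrA ler_wpM2l // ler_wpM2r.
  have lt2 : lam * t2 <= lam * (s * d ^+ 2) by rewrite ler_wpM2l // ltW.
  have Lbe : L * b * e <= hL * ((1 + eps) * a) * e.
    by rewrite ler_wpM2r //; apply: ler_pM => //; exact: ltW.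
  by rewrite /P1; lra.
have coef0 : 0 <= (3 * s / 2 + mu / 4) * lam by rewrite mulr_ge0 ?(ltW lam0) //; lra.
have P1_ge : (1 - eps) ^+ 2 / 2 * a ^+ 2 - (1 - eps) * hL * (2 + eps) / 2 * a * e
             + lam * W * e ^+ 2 <= (1 - eps) * P1.
  by have := ler_wpM2l coef0 de; rewrite /P1 /W; lra.
have A0 : 0 < (1 - eps) ^+ 2 / 2 by rewrite divr_gt0 ?exprn_gt0.
have Q0 : 0 <= (1 - eps) ^+ 2 / 2 * a ^+ 2 - (1 - eps) * hL * (2 + eps) / 2 * a * e
               + lam * W * e ^+ 2.
  apply: quadratic_form_ge0 => //.
  by have := ler_wpM2l (sqr_ge0 (1 - eps)) disc; lra.
have : 0 <= P1 by rewrite -(pmulr_rge0 _ eps1); lra.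
lra.
Qed.

Theorem proposition6 (R : realType) (n p : nat) (lam eps L mu : R)
  (f : 'M[R]_(n, p) -> R) :
  (1 <= p)%N -> (p <= n)%N ->
  0 < lam -> 0 < eps -> eps < 3 / 4 ->
  C2 f ->
  0 < L ->
  (forall X Y, X \in (@St_eps R n p eps) -> Y \in (@St_eps R n p eps) ->
     frob_norm (egrad f X - egrad f Y) <= L * frob_norm (X - Y)) ->
  let L' := sup [set frob_norm (egrad f X) | X in (@St_eps R n p eps)] in
  let hatL := Num.max L L' in
  let s := sup [set frob_norm (msym (X^T *m egrad f X)) | X in (@St_eps R n p eps)] in
  mu >= 2 / (3 - 4 * eps) *
        (L * (1 - eps) + 3 * s + hatL ^+ 2 * ((1 + eps) ^+ 2 / (lam * (1 - eps)))) ->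
  let nu := lam * mu in
  forall X, X \in (@St_eps R n p eps) ->
    frob_inner (egrad (merit mu f) X) (landing lam f X)
      >= 2^-1 * frob_norm (rgrad f X) ^+ 2 + nu * Ncons X.
Proof.
move=> _ _ lam0 eps0 eps34 f_C2 L0 f_lip L' hatL s mu_ge nu X XSt.
have eps1 : eps < 1 by lra.
have XD : frob_norm (X^T *m X - 1%:M) <= eps by rewrite -in_St_eps.
have [G_L' S_s] := le_sup_St_eps (ltW L0) f_lip XSt.
have DG_le := frob_norm_derive_egrad_landing_le f_C2 eps0 eps1 lam0 (ltW L0) f_lip XSt.
rewrite frob_inner_egrad_merit_landing // -!frob_norm_sqr /nu /Ncons.
apply: (landing_descent_ineq (g := frob_norm (egrad f X)) (s := s) (hL := hatL)) mu_ge;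
  rewrite ?frob_norm_ge0 ?le_max ?lexx //.
- by rewrite G_L' orbT.
- exact: le_trans (frob_norm_ge0 _) S_s.
- by rewrite !frob_norm_sqr; exact: frob_inner_mulBX_le.
- by rewrite !frob_norm_sqr; exact: frob_inner_mulXA_ge.
- by rewrite -mulmxA; exact: frob_inner_mulmx_le.
- apply: le_trans (frob_inner_mulmx_le _ _ _) _.
  by rewrite mulrAC expr2 [leRHS]mulrC ler_wpM2l ?mulr_ge0 ?frob_norm_ge0.
- apply: le_trans (frob_inner_le _ _) _; rewrite ler_wpM2r ?frob_norm_ge0 //.
  apply: (le_trans DG_le); rewrite ler_wpM2l ?(ltW L0) //.
  by apply: le_trans (ler_frob_normD _ _) _; rewrite frob_normZ ger0_norm ?(ltW lam0).
Qed.
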